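(* Let $b,c:\mathbb{R}\to[0,\infty)$ be continuous, let $t_0\in\mathbb{R}$, $x_0>0$, $y_0>0$, $z_0\ge 0$, and put $N=x_0+y_0+z_0$ and $\kappa=\frac{y_0}{x_0}$. Consider the system $$x'=-\frac{b(t)xy}{x+y},\qquad y'=\frac{b(t)xy}{x+y}-c(t)y,\qquad z'=c(t)y,$$ with $x,y>0$ and $x(t_0)=x_0$, $y(t_0)=y_0$, $z(t_0)=z_0$. Then the solution is given by $$x(t)=x_0\exp\left\{-\kappa\int_{t_0}^t b(s)\left(\kappa+e^{\int_{t_0}^s (c-b)(\tau)\,d\tau}\right)^{-1}ds\right\},$$ $$y(t)=y_0\exp\left\{\int_{t_0}^t\left[b(s)\left(1+\kappa e^{\int_{t_0}^s (b-c)(\tau)\,d\tau}\right)^{-1}-c(s)\right]ds\right\},$$ $$z(t)=N-\left(y_0e^{\int_{t_0}^t (b-c)(s)\,ds}+x_0\right)\exp\left\{-\kappa\int_{t_0}^t b(s)\left(\kappa+e^{\int_{t_0}^s (c-b)(\tau)\,d\tau}\right)^{-1}ds\right\}.$$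
   Context: $x$, $y$, $z$ denote the susceptible, infected and removed populations, respectively, as functions of real time $t$. *)

From Stdlib Require Import Reals.
From Coquelicot Require Export Coquelicot.
Open Scope R_scope.

(* The ratio r = y/x solves the linear equation r' = (b - c) r, so r = kappa e^F with
   F = int (b - c). Hence y/(x + y) = kappa/(kappa + e^(-F)) is an explicit function of
   time, which turns the equations for x and y into linear equations with explicit
   continuous coefficients; z is then read off from the conservation of x + y + z. *)
From Stdlib Require Import Reals Lra.
From Coquelicot Require Import Coquelicot.
Open Scope R_scope.

Lemma is_derive_0_const (f : R -> R) :
  (forall t, is_derive f t 0) -> forall s t, f t = f s.
Proof.
  intros hf s t.
  destruct (MVT_gen f s t (fun _ => 0)) as [u [_ hu]].
  - intros v _; apply hf.
  - intros v _; apply continuity_pt_filterlim, (ex_derive_continuous f).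
    exists 0; apply hf.
  - lra.
Qed.

Lemma is_derive_RInt_continuous (f : R -> R) (a : R) :
  (forall t, continuous f t) -> forall t, is_derive (fun t => RInt f a t) t (f t).
Proof.
  intros hf t.
  apply (is_derive_RInt f _ a); [|apply hf].
  apply filter_forall; intros u.
  apply (RInt_correct f), (ex_RInt_continuous f); intros; apply hf.
Qed.

Lemma continuous_RInt_continuous (f : R -> R) (a t : R) :
  (forall t, continuous f t) -> continuous (fun t => RInt f a t) t.
Proof.
  intros hf; apply (ex_derive_continuous (fun t => RInt f a t)).
  exists (f t); apply is_derive_RInt_continuous, hf.
Qed.

Lemma RInt_minus_swap (f g : R -> R) (a t : R) :
  (forall t, continuous f t) -> (forall t, continuous g t) ->
  RInt (fun s => g s - f s) a t = - RInt (fun s => f s - g s) a t.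
Proof.
  intros hf hg.
  rewrite <- (RInt_opp (fun s => f s - g s)).
  - apply RInt_ext; intros s _; unfold opp; simpl; ring.
  - apply (ex_RInt_continuous (fun s => f s - g s)); intros s _.
    apply (continuous_minus f g); auto.
Qed.

(* With A' = a, the product u e^(-A) has derivative 0. *)
Lemma linear_ode_exp (u a A : R -> R) :
  (forall t, is_derive A t (a t)) -> (forall t, is_derive u t (a t * u t)) ->
  forall s t, u t = u s * exp (A t - A s).
Proof.
  intros hA hu s t.
  assert (hconst : u t * exp (- A t) = u s * exp (- A s)).
  { apply (is_derive_0_const (fun t => u t * exp (- A t))); intros v.
    eapply (eq_ind_r (is_derive _ v)).
    - apply (is_derive_mult u); [apply hu| |intros; apply Rmult_comm].
      apply (is_derive_comp exp); [apply is_derive_exp|].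
      apply (is_derive_opp A), hA.
    - unfold plus, scal, opp, mult; simpl; unfold mult; simpl; ring. }
  replace (u t) with (u t * exp (- A t) * exp (A t))
    by (rewrite Rmult_assoc, <- exp_plus, Rplus_opp_l, exp_0; ring).
  rewrite hconst, Rmult_assoc, <- exp_plus.
  do 2 f_equal; ring.
Qed.

Lemma linear_ode_RInt (u a : R -> R) (t0 : R) :
  (forall t, continuous a t) -> (forall t, is_derive u t (a t * u t)) ->
  forall t, u t = u t0 * exp (RInt a t0 t).
Proof.
  intros ha hu t.
  rewrite (linear_ode_exp u a (fun t => RInt a t0 t)) with (s := t0); [|auto..].
  - rewrite RInt_point; unfold zero; simpl; rewrite Rminus_0_r; reflexivity.
  - apply is_derive_RInt_continuous, ha.
Qed.

Section SIR.

Variables b c : R -> R.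
Hypothesis hb_cont : forall t, continuous b t.
Hypothesis hc_cont : forall t, continuous c t.

Variables x y z : R -> R.
Hypothesis hx_pos : forall t, 0 < x t.
Hypothesis hy_pos : forall t, 0 < y t.
Hypothesis hx' : forall t, is_derive x t (- (b t * x t * y t / (x t + y t))).
Hypothesis hy' : forall t, is_derive y t (b t * x t * y t / (x t + y t) - c t * y t).
Hypothesis hz' : forall t, is_derive z t (c t * y t).

Variables t0 kappa : R.
Hypothesis hkappa : kappa = y t0 / x t0.

Lemma kappa_pos : 0 < kappa.
Proof. rewrite hkappa; apply Rdiv_lt_0_compat; auto. Qed.

Lemma continuous_b_minus_c (t : R) : continuous (fun s => b s - c s) t.
Proof. apply (continuous_minus b c); auto. Qed.

Lemma continuous_c_minus_b (t : R) : continuous (fun s => c s - b s) t.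
Proof. apply (continuous_minus c b); auto. Qed.

Lemma sir_ratio (t : R) :
  y t / x t = kappa * exp (RInt (fun s => b s - c s) t0 t).
Proof.
  rewrite hkappa.
  apply (linear_ode_RInt (fun t => y t / x t)); [apply continuous_b_minus_c|].
  intros s; pose proof (hx_pos s); pose proof (hy_pos s).
  eapply (eq_ind_r (is_derive _ s)).
  - apply is_derive_div; auto; lra.
  - simpl; field; lra.
Qed.

Lemma sir_incidence (t : R) :
  b t * x t * y t / (x t + y t)
  = kappa * (b t * / (kappa + exp (RInt (fun s => c s - b s) t0 t))) * x t.
Proof.
  rewrite (RInt_minus_swap b c), exp_Ropp by auto.
  set (r := kappa * exp (RInt (fun s => b s - c s) t0 t)).
  assert (hr : 0 < r) by (apply Rmult_lt_0_compat; [apply kappa_pos | apply exp_pos]).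
  pose proof (hx_pos t); pose proof (exp_pos (RInt (fun s => b s - c s) t0 t)).
  replace (y t) with (r * x t) by (unfold r; rewrite <- sir_ratio; field; lra).
  unfold r; field; fold r; repeat split; nra.
Qed.

Lemma continuous_susceptible_rate (t : R) :
  continuous (fun s => b s * / (kappa + exp (RInt (fun tau => c tau - b tau) t0 s))) t.
Proof.
  apply (continuous_mult b); [apply hb_cont|].
  apply continuous_Rinv_comp.
  - apply (continuous_plus (fun _ => kappa)); [apply continuous_const|].
    apply continuous_exp_comp, continuous_RInt_continuous, continuous_c_minus_b.
  - pose proof kappa_pos; pose proof (exp_pos (RInt (fun tau => c tau - b tau) t0 t)).
    lra.
Qed.

Lemma continuous_infected_rate (t : R) :
  continuous (fun s => b s * / (1 + kappa * exp (RInt (fun tau => b tau - c tau) t0 s)) - c s) t.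
Proof.
  apply (continuous_minus _ c); [|apply hc_cont].
  apply (continuous_mult b); [apply hb_cont|].
  apply continuous_Rinv_comp.
  - apply (continuous_plus (fun _ => 1)); [apply continuous_const|].
    apply (continuous_mult (fun _ => kappa)); [apply continuous_const|].
    apply continuous_exp_comp, continuous_RInt_continuous, continuous_b_minus_c.
  - pose proof kappa_pos; pose proof (exp_pos (RInt (fun tau => b tau - c tau) t0 t)).
    assert (0 < kappa * exp (RInt (fun tau => b tau - c tau) t0 t)) by
      (apply Rmult_lt_0_compat; lra).
    lra.
Qed.

Lemma sir_susceptible (t : R) :
  x t = x t0 * exp (- kappa * RInt (fun s =>
          b s * / (kappa + exp (RInt (fun tau => c tau - b tau) t0 s))) t0 t).
Proof.
  set (g := fun s => b s * / (kappa + exp (RInt (fun tau => c tau - b tau) t0 s))).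
  rewrite (linear_ode_exp x (fun s => - kappa * g s) (fun s => - kappa * RInt g t0 s))
    with (s := t0).
  - rewrite RInt_point; unfold zero; simpl; rewrite Rmult_0_r, Rminus_0_r; reflexivity.
  - intros s; apply is_derive_scal, is_derive_RInt_continuous, continuous_susceptible_rate.
  - intros s.
    replace (- kappa * g s * x s) with (- (b s * x s * y s / (x s + y s)))
      by (rewrite sir_incidence; unfold g; ring).
    apply hx'.
Qed.

Lemma sir_infected (t : R) :
  y t = y t0 * exp (RInt (fun s =>
          b s * / (1 + kappa * exp (RInt (fun tau => b tau - c tau) t0 s)) - c s) t0 t).
Proof.
  apply linear_ode_RInt; [apply continuous_infected_rate|].
  intros s; pose proof (hx_pos s); pose proof (hy_pos s).
  eapply (eq_ind_r (is_derive y s)); [apply hy'|].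
  simpl; rewrite <- sir_ratio; field; lra.
Qed.

Lemma sir_total (t : R) : x t + y t + z t = x t0 + y t0 + z t0.
Proof.
  apply (is_derive_0_const (fun t => x t + y t + z t)); intros s.
  eapply (eq_ind_r (is_derive _ s)).
  - apply (is_derive_plus (fun t => x t + y t)); [apply (is_derive_plus x y)|]; auto.
  - unfold plus; simpl; ring.
Qed.

Lemma sir_removed (t : R) :
  z t = x t0 + y t0 + z t0 - (y t0 * exp (RInt (fun s => b s - c s) t0 t) + x t0)
          * exp (- kappa * RInt (fun s =>
              b s * / (kappa + exp (RInt (fun tau => c tau - b tau) t0 s))) t0 t).
Proof.
  pose proof (hx_pos t); pose proof (hx_pos t0).
  assert (hy : y t = kappa * exp (RInt (fun s => b s - c s) t0 t) * x t)
    by (rewrite <- sir_ratio; field; lra).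
  rewrite <- (sir_total t), hy, sir_susceptible, hkappa.
  field; lra.
Qed.

End SIR.

Theorem mainTheorem1
  (b c : R -> R)
  (hb_cont : forall t, continuous b t) (hc_cont : forall t, continuous c t)
  (hb_nn : forall t, 0 <= b t) (hc_nn : forall t, 0 <= c t)
  (t0 x0 y0 z0 : R) (hx0 : 0 < x0) (hy0 : 0 < y0) (hz0 : 0 <= z0)
  (x y z : R -> R)
  (hx_pos : forall t, 0 < x t) (hy_pos : forall t, 0 < y t)
  (hx' : forall t, is_derive x t (- (b t * x t * y t / (x t + y t))))
  (hy' : forall t, is_derive y t (b t * x t * y t / (x t + y t) - c t * y t))
  (hz' : forall t, is_derive z t (c t * y t))
  (hxt0 : x t0 = x0) (hyt0 : y t0 = y0) (hzt0 : z t0 = z0) :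
  let N := x0 + y0 + z0 in
  let kappa := y0 / x0 in
  forall t : R,
    x t = x0 * exp (- kappa * RInt (fun s =>
              b s * / (kappa + exp (RInt (fun tau => c tau - b tau) t0 s))) t0 t)
    /\ y t = y0 * exp (RInt (fun s =>
              b s * / (1 + kappa * exp (RInt (fun tau => b tau - c tau) t0 s)) - c s) t0 t)
    /\ z t = N - (y0 * exp (RInt (fun s => b s - c s) t0 t) + x0)
              * exp (- kappa * RInt (fun s =>
                  b s * / (kappa + exp (RInt (fun tau => c tau - b tau) t0 s))) t0 t).
Proof.
  subst x0 y0 z0; intros N kappa t.
  assert (hkappa : kappa = y t0 / x t0) by reflexivity.
  split; [|split].
  - exact (sir_susceptible b c hb_cont hc_cont x y hx_pos hy_pos hx' hy' t0 kappa hkappa t).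
  - exact (sir_infected b c hb_cont hc_cont x y hx_pos hy_pos hx' hy' t0 kappa hkappa t).
  - exact (sir_removed b c hb_cont hc_cont x y z hx_pos hy_pos hx' hy' hz' t0 kappa hkappa t).
Qed.
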